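(* Let $q$ be an odd prime power, $P\in\mathbb{F}_q[T]$ monic irreducible, $\nu\ge1$, and $f\in\mathbb{F}_q[T]$ with $f\not\equiv0\bmod P^\nu$. Write $f\equiv P^\alpha g\bmod P^\nu$ with $0\le\alpha<\nu$ maximal and $g\in\mathbb{F}_q[T]$. Then: (1) if $\chi_q(P)=-1$, then $f\bmod P^\nu\in\mathcal{A}_q(P^\nu)$ iff $\alpha$ is even; (2) if $\chi_q(P)=0$ (i.e. $P=T$), then $f\bmod P^\nu\in\mathcal{A}_q(P^\nu)$ iff $\chi_q(g)=1$; (3) if $\chi_q(P)=1$, then $f\bmod P^\nu\in\mathcal{A}_q(P^\nu)$.
   Context: $\chi_q(f)=0$ if $f(0)=0$, $1$ if $f(0)$ is a nonzero square in $\mathbb{F}_q$, $-1$ otherwise. $\mathcal{A}_q(P^\nu)=\{A^2+TB^2\bmod P^\nu:A,B\in\mathbb{F}_q[T]\}\subseteq\mathbb{F}_q[T]/(P^\nu)$. *)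

From HB Require Import structures.
From mathcomp Require Import all_boot all_order all_algebra all_field.
Set Implicit Arguments. Unset Strict Implicit. Unset Printing Implicit Defensive.
Import Order.TTheory GRing.Theory Num.Theory.
Local Open Scope ring_scope.

Definition chi (F : finFieldType) (f : {poly F}) : int :=
  if f.[0] == 0 then 0
  else if [exists y : F, y ^+ 2 == f.[0]] then 1 else -1.

Definition inA (F : finFieldType) (M f : {poly F}) : Prop :=
  exists A B : {poly F}, (A ^+ 2 + 'X * B ^+ 2) %% M = f %% M.

(* Let K = F[T]/(P) and theta the class of T.  When P(0) != 0, every element
   of the finite field K is a ^ 2 + theta b ^ 2, and Hensel's lemma lifts such a
   representation of a unit to P ^ nu.  Since -theta has norm P(0) from K to F,
   Euler's criterion shows that -T is a square mod P exactly when P(0) is a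
   square in F.  If it is, T = - t ^ 2 mod P ^ nu and A ^ 2 + T B ^ 2 =
   (A - t B) (A + t B) takes every value; if not, the form is anisotropic mod P,
   so P divides A ^ 2 + T B ^ 2 to an even power.  For P = T, the lowest-order
   part of A ^ 2 + T B ^ 2 is T ^ m times a unit whose constant term is a
   nonzero square, and conversely such units are squares mod T ^ nu. *)

From HB Require Import structures.
From mathcomp Require Import all_boot all_order all_algebra all_field all_solvable.
From mathcomp Require Import zify ring.
Set Implicit Arguments. Unset Strict Implicit. Unset Printing Implicit Defensive.
Import Order.TTheory GRing.Theory Num.Theory.
Local Open Scope ring_scope.

Section FinFieldFacts.
Variable L : finFieldType.

Lemma expf_card_exp (x : L) i : x ^+ (#|L| ^ i) = x.
Proof. by elim: i => [|i IHi]; rewrite ?expr1 // expnSr exprM IHi expf_card. Qed.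

Lemma pchar_nat_card : [pchar L].-nat #|L|.
Proof.
have [p pp cp] := finPcharP L.
by rewrite (eq_pnat _ (pcharf_eq cp)) (card_pprimeChar cp) pnatX pnat_id.
Qed.

Lemma finField_odd_two_neq0 : odd #|L| -> (2%:R : L) != 0.
Proof.
move=> oddL; apply/eqP => L2.
have c2 : 2%N \in [pchar L] by rewrite inE /= L2 eqxx.
have /p_natP[k Ek] : (2%N : nat_pred).-nat #|L|.
  by rewrite -(eq_pnat _ (pcharf_eq c2)) pchar_nat_card.
by move: oddL (finNzRing_gt1 L); rewrite Ek oddX => /orP[] // /eqP ->.
Qed.

End FinFieldFacts.

Section FinFieldSquares.
Variable L : finFieldType.
Hypothesis oddL : odd #|L|.

Local Notation m := #|L|./2.

Lemma card_finField_predE : #|L|.-1 = m.*2.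
Proof. by rewrite odd_halfK. Qed.

Lemma expf_card_pred (x : L) : x != 0 -> x ^+ #|L|.-1 = 1.
Proof.
move=> nx; apply: (mulfI nx).
by rewrite mulr1 -exprS prednK ?expf_card // ltnW // finNzRing_gt1.
Qed.

Lemma finField_prim_root : exists z : L, #|L|.-1.-primitive_root z.
Proof.
have n_gt0 : (0 < #|L|.-1)%N by rewrite -subn1 subn_gt0 finNzRing_gt1.
have : has #|L|.-1.-primitive_root (enum (predC1 (0 : L))).
  apply: has_prim_root => //; last by rewrite -cardE cardC1.
  - by apply/allP => x; rewrite mem_enum unity_rootE => /expf_card_pred ->.
  - exact: enum_uniq.
by case/hasP => z _ pz; exists z.
Qed.

Lemma euler_criterion (x : L) :
  x != 0 -> (exists y, y ^+ 2 = x) <-> x ^+ m = 1.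
Proof.
move=> nx; split=> [[y yx] | xm].
  have ny : y != 0 by apply: contraNneq nx => y0; rewrite -yx y0 expr0n.
  by rewrite -yx -exprM mul2n -card_finField_predE expf_card_pred.
have [z pz] := finField_prim_root.
have [i xi] := prim_rootP pz (expf_card_pred nx).
have m_gt0 : (0 < m)%N.
  by rewrite -double_gt0 -card_finField_predE (leq_trans _ (ltn_ord i)).
move: xm; rewrite xi -exprM => /eqP; rewrite -(prim_order_dvd pz).
rewrite [X in (X %| _)%N]card_finField_predE -muln2 mulnC dvdn_pmul2r //.
move=> /divnK <-.
by exists (z ^+ (i %/ 2)); rewrite -exprM.
Qed.

Lemma card_squares : (m < #|[set x ^+ 2 | x : L]|)%N.
Proof.
have [z pz] := finField_prim_root.
have z0 : z != 0.
  apply/eqP => z0; have := prim_expr_order pz.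
  rewrite z0 expr0n gtn_eqF ?(prim_order_gt0 pz) //= => /esym/eqP.
  by rewrite oner_eq0.
pose Z := [set z ^+ j.*2 | j : 'I_m].
have cardZ : #|Z| = m.
  rewrite card_imset ?card_ord // => i j /eqP.
  rewrite (eq_prim_root_expr pz) !modn_small ?card_finField_predE ?ltn_double //.
  by rewrite -!muln2 eqn_mul2r => /eqP /val_inj.
have Z0 : 0 \notin Z.
  by apply/imsetP => -[j _] /esym/eqP; rewrite expf_eq0 (negbTE z0) andbF.
have : 0 |: Z \subset [set x ^+ 2 | x : L].
  apply/subsetP => _ /setU1P[-> | /imsetP[j _ ->]].
    by apply/imsetP; exists 0; rewrite ?expr0n.
  by apply/imsetP; exists (z ^+ j); rewrite // -exprM muln2.
by move/subset_leq_card; rewrite cardsU1 Z0 cardZ.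
Qed.

(* Both {a ^ 2} and {c - t b ^ 2} have more than #|L|/2 elements. *)
Lemma finField_sqr_add_mul_sqr (t c : L) :
  t != 0 -> exists a b, a ^+ 2 + t * b ^+ 2 = c.
Proof.
move=> nt; set S := [set x ^+ 2 | x : L].
pose T := [set c - t * s | s in S].
have cardT : #|T| = #|S|.
  by rewrite card_imset // => x y /addrI /oppr_inj /(mulfI nt).
have /set0Pn[_ /setIP[/imsetP[a _ ->] /imsetP[_ /imsetP[b _ ->] E]]] :
    S :&: T != set0.
  apply/eqP => ST0; have := max_card (S :|: T).
  rewrite cardsU ST0 cards0 subn0 cardT -(prednK (ltnW (finNzRing_gt1 L))).
  by rewrite card_finField_predE -addnn; have := card_squares; rewrite -/S; lia.
by exists a, b; rewrite E subrK.
Qed.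

End FinFieldSquares.

Section PolyDivisibility.
Variable F : fieldType.
Implicit Types (M P u v g r t : {poly F}).

Lemma modp_eq_dvdP M u v : u %% M = v %% M <-> M %| u - v.
Proof.
rewrite /dvdp modpD modpN subr_eq0.
by split=> [-> // | /eqP].
Qed.

Lemma coprimep_invmod M r : coprimep M r -> exists s, M %| r * s - 1.
Proof.
case/Bezout_eq1_coprimepP => -[x y] /= e; exists y.
have -> : r * y - 1 = - (x * M) by rewrite -e; ring.
by rewrite dvdpNr dvdp_mull.
Qed.

Lemma irredp_neq0 P : irreducible_poly P -> P != 0.
Proof. by case=> sP _; rewrite -size_poly_gt0 ltnW. Qed.

Lemma dvdp_expS_mul2l P k u : P != 0 -> P ^+ k.+1 %| P ^+ k * u -> P %| u.
Proof. by move=> nP; rewrite exprSr dvdp_mul2l // expf_neq0. Qed.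

Lemma dvdp_exp_decomp P u : (1 < size P)%N -> u != 0 ->
  exists m v, u = P ^+ m * v /\ ~~ (P %| v).
Proof.
move=> sP; have nP : P != 0 by rewrite -size_poly_gt0 ltnW.
elim: {u}(size u) {-2}u (leqnn (size u)) => [|n IHn] u su nu.
  by move: nu; rewrite -size_poly_eq0 -leqn0 su.
have [/dvdpP[u1 eu] | Pu] := boolP (P %| u); last by exists 0%N, u; rewrite mul1r.
have nu1 : u1 != 0 by apply: contraNneq nu => u10; rewrite eu u10 mul0r.
have su1 : (size u1 <= n)%N.
  move: su sP; rewrite eu size_mul // (polySpred nu1) (polySpred nP); lia.
have [m [v [eu1 Pv]]] := IHn u1 su1 nu1.
by exists m.+1, v; rewrite eu eu1 exprS mulrC mulrA.
Qed.

(* The exponent of P in A and B is extracted from gcdp A B. *)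
Lemma dvdp_exp_decomp2 P A B : (1 < size P)%N -> (A != 0) || (B != 0) ->
  exists k A1 B1,
    [/\ A = P ^+ k * A1, B = P ^+ k * B1 & ~~ (P %| A1) || ~~ (P %| B1)].
Proof.
move=> sP AB; have nP : P != 0 by rewrite -size_poly_gt0 ltnW.
have nG : gcdp A B != 0 by rewrite gcdp_eq0 negb_and.
have [k [G' [eG PG']]] := dvdp_exp_decomp sP nG.
have PkA : P ^+ k %| A by rewrite (dvdp_trans _ (dvdp_gcdl A B)) // eG dvdp_mulr.
have PkB : P ^+ k %| B by rewrite (dvdp_trans _ (dvdp_gcdr A B)) // eG dvdp_mulr.
exists k, (A %/ P ^+ k), (B %/ P ^+ k); split; rewrite 1?mulrC ?divpK //.
rewrite -negb_and; apply: contra PG' => /andP[PA PB].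
apply: (dvdp_expS_mul2l (k := k) nP); rewrite -eG dvdp_gcd.
rewrite -(divpK PkA) -(divpK PkB) exprSr ![_ * P ^+ k]mulrC.
by rewrite !dvdp_mul2l ?PA ?PB // expf_neq0.
Qed.

Lemma dvdp_exp_valuation_eq P nu m a u g : P != 0 -> ~~ (P %| u) -> ~~ (P %| g) ->
  (a < nu)%N -> P ^+ nu %| P ^+ m * u - P ^+ a * g -> m = a /\ P %| u - g.
Proof.
move=> nP Pu Pg anu D.
have Dk k : (k <= nu)%N -> P ^+ k %| P ^+ m * u - P ^+ a * g.
  by move=> knu; apply: dvdp_trans D; apply: dvdp_exp2l.
case: (ltngtP m a) => [ma | am | ma].
- case/negP: Pu; apply: (dvdp_expS_mul2l (k := m) nP).
  have Da : P ^+ m.+1 %| P ^+ a * g by rewrite dvdp_mulr // dvdp_exp2l.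
  by have := dvdp_add (Dk _ (ltnW (leq_ltn_trans ma anu))) Da; rewrite subrK.
- case/negP: Pg; apply: (dvdp_expS_mul2l (k := a) nP).
  have Dm : P ^+ a.+1 %| P ^+ m * u by rewrite dvdp_mulr // dvdp_exp2l.
  by have := dvdp_sub Dm (Dk _ anu); rewrite opprB addrC subrK.
subst m; split=> //; apply: (dvdp_expS_mul2l (k := a) nP).
by rewrite mulrBr Dk.
Qed.

Lemma hensel_square P u t0 : (2%:R : F) != 0 -> irreducible_poly P ->
  ~~ (P %| t0) -> P %| t0 ^+ 2 - u ->
  forall n, exists t, P ^+ n.+1 %| t ^+ 2 - u /\ P %| t - t0.
Proof.
move=> two_neq0 iP Pt0 D; have nP := irredp_neq0 iP.
elim=> [|n [t [Dt Dtt0]]]; first by exists t0; rewrite expr1 subrr dvdp0.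
have /coprimep_invmod[w Dw] : coprimep P t.
  rewrite irreducible_poly_coprime //; apply: contra Pt0 => Pt.
  by rewrite -(subrK t t0) addrC -opprB dvdp_addr ?dvdpNr.
case/dvdpP: Dt => e De; set Q := P ^+ n.+1 in De *.
have {De} -> : u = t ^+ 2 - e * Q by rewrite -De opprB addrC subrK.
pose i2 := ((2%:R : F)^-1)%:P.
have H2 : 2%:R * i2 = 1 by rewrite -polyC_natr -polyCM mulfV.
(* Newton step: t' = t - (t ^ 2 - u) / (2 t) *)
exists (t - i2 * e * w * Q); split.
  have -> : (t - i2 * e * w * Q) ^+ 2 - (t ^+ 2 - e * Q) =
      Q * (e * (1 - t * w) - e * t * w * (2%:R * i2 - 1))
      + Q * Q * (i2 * e * w) ^+ 2.
    by ring.
  rewrite H2 subrr mulr0 subr0 /Q exprSr; apply: dvdp_add.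
    by rewrite dvdp_mul // dvdp_mull // -dvdpNr opprB.
  by rewrite -mulrA dvdp_mul // dvdp_mulr // exprS dvdp_mulIl.
by rewrite addrAC dvdp_add // dvdpNr dvdp_mull // /Q exprS dvdp_mulIl.
Qed.

End PolyDivisibility.

Section BinaryFormX.
Variable F : fieldType.
Implicit Types (P A B x : {poly F}).

Lemma dvdp_Xl x : ('X %| x) = (x.[0] == 0).
Proof. by rewrite -[X in X %| _]subr0 -polyC0 dvdp_XsubCl rootE. Qed.

Lemma irredp_X : irreducible_poly ('X : {poly F}).
Proof. by have := irredp_XsubC (0 : F); rewrite subr0. Qed.

Lemma irredp_ndvdp_X P : irreducible_poly P -> P.[0] != 0 -> ~~ (P %| 'X).
Proof. by move=> iP P0; rewrite -irreducible_poly_coprime // coprimepX rootE. Qed.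

Lemma irredp_dvdp_sqr P x : irreducible_poly P -> (P %| x ^+ 2) = (P %| x).
Proof.
by move=> iP; apply/negb_inj; rewrite -!irreducible_poly_coprime ?coprimep_pexpr.
Qed.

Lemma sqr_add_X_sqr_even_valuation P A B :
    irreducible_poly P -> (forall r, ~~ (P %| r ^+ 2 + 'X)) ->
    (A != 0) || (B != 0) ->
  exists m u, A ^+ 2 + 'X * B ^+ 2 = P ^+ m.*2 * u /\ ~~ (P %| u).
Proof.
move=> iP nsq AB; have sP : (1 < size P)%N by case: iP.
have [k [A1 [B1 [-> -> PAB]]]] := dvdp_exp_decomp2 sP AB.
exists k, (A1 ^+ 2 + 'X * B1 ^+ 2); split; first by rewrite -muln2 exprM; ring.
apply/negP => Pu; have PB1 : ~~ (P %| B1).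
  rewrite -negb_and in PAB; apply: contra PAB => PB1.
  have XB1 : P %| 'X * B1 ^+ 2 by rewrite dvdp_mull // expr2 dvdp_mulr.
  by rewrite PB1 andbT -(irredp_dvdp_sqr _ iP) -(dvdp_addl _ XB1).
have [w Dw] : exists w, P %| B1 * w - 1.
  by apply: coprimep_invmod; rewrite irreducible_poly_coprime.
case/negP: (nsq (A1 * w)).
have -> : (A1 * w) ^+ 2 + 'X =
    w ^+ 2 * (A1 ^+ 2 + 'X * B1 ^+ 2) - 'X * (B1 * w + 1) * (B1 * w - 1) by ring.
by rewrite dvdp_sub ?dvdp_mull.
Qed.

Lemma sqr_add_X_sqr_Xvaluation A B : (A != 0) || (B != 0) ->
  exists m u w, [/\ A ^+ 2 + 'X * B ^+ 2 = 'X ^+ m * u, u.[0] = w ^+ 2 & w != 0].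
Proof.
move=> AB; have sX : (1 < size ('X : {poly F}))%N by rewrite size_polyX.
have [k [A1 [B1 [-> -> XAB]]]] := dvdp_exp_decomp2 sX AB.
have [XA1 | nXA1] := boolP ('X %| A1); last first.
  exists k.*2, (A1 ^+ 2 + 'X * B1 ^+ 2), A1.[0]; split.
  - by rewrite -muln2 exprM; ring.
  - by rewrite !hornerE.
  - by rewrite -dvdp_Xl.
move: XAB; rewrite XA1 /= => nXB1; case/dvdpP: XA1 => A2 ->.
exists k.*2.+1, ('X * A2 ^+ 2 + B1 ^+ 2), B1.[0]; split.
- have -> : ('X ^+ k.*2.+1 : {poly F}) = 'X * ('X ^+ k) ^+ 2.
    by rewrite exprS -muln2 exprM.
  by ring.
- by rewrite !hornerE.
- by rewrite -dvdp_Xl.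
Qed.

Lemma sqr_add_X_sqr_lift P g A B n : (2%:R : F) != 0 -> irreducible_poly P ->
    ~~ (P %| 'X) -> ~~ (P %| g) -> P %| A ^+ 2 + 'X * B ^+ 2 - g ->
  exists A' B', P ^+ n.+1 %| A' ^+ 2 + 'X * B' ^+ 2 - g.
Proof.
move=> two_neq0 iP PX Pg DAB.
have [PA | nPA] := boolP (P %| A); last first.
  have DA : P %| A ^+ 2 - (g - 'X * B ^+ 2) by rewrite opprB addrA.
  have [t [Dt _]] := hensel_square two_neq0 iP nPA DA n.
  by exists t, B; rewrite -addrA -opprB.
have nPB : ~~ (P %| B).
  apply: contra Pg => PB.
  have PAB : P %| A ^+ 2 + 'X * B ^+ 2.
    by rewrite dvdp_add ?dvdp_mull // expr2 dvdp_mulr.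
  by have := dvdp_sub PAB DAB; rewrite opprB addrC subrK.
have [w Dw] : exists w, P ^+ n.+1 %| 'X * w - 1.
  by apply: coprimep_invmod; rewrite coprimep_expl // irreducible_poly_coprime.
have DB : P %| B ^+ 2 - (g - A ^+ 2) * w.
  have -> : B ^+ 2 - (g - A ^+ 2) * w =
      w * (A ^+ 2 + 'X * B ^+ 2 - g) - B ^+ 2 * ('X * w - 1) by ring.
  by rewrite dvdp_sub ?dvdp_mull // (dvdp_trans _ Dw) // dvdp_exp.
have [t [Dt _]] := hensel_square two_neq0 iP nPB DB n.
exists A, t.
have -> : A ^+ 2 + 'X * t ^+ 2 - g =
    'X * (t ^+ 2 - (g - A ^+ 2) * w) + (g - A ^+ 2) * ('X * w - 1) by ring.
by rewrite dvdp_add ?dvdp_mull.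
Qed.

End BinaryFormX.

Section ResidueField.
Variables (F : finFieldType) (P : {poly F}).
Hypotheses (hPm : P \is monic) (hPi : irreducible_poly P) (oddF : odd #|F|).

Let hI : monic_irreducible_poly P := (hPi, hPm).
Local Notation K := {poly %/ P with hI}.
Local Notation q := #|F|.
Local Notation d := (size P).-1.
Let qC : F -> K := qfpoly_const hI.
Let theta : K := in_qpoly P 'X.
Let conjugates := [seq theta ^+ (q ^ i) | i <- index_iota 0 d].

Let q_gt1 : (1 < q)%N := finNzRing_gt1 F.

Lemma odd_card_residue : odd #|K|.
Proof. by rewrite card_qfpoly oddX oddF orbT. Qed.

Lemma in_qpoly_eq0 r : (in_qpoly P r == 0 :> K) = (P %| r).
Proof.
by rewrite -val_eqE /= (mk_monicE hI) -Pdiv.IdomainMonic.modpE.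
Qed.

Lemma in_qpoly_valK (x : K) : in_qpoly P (x : {poly F}) = x.
Proof. by apply: val_inj; rewrite /= Pdiv.Ring.rmodp_small // size_mk_monic. Qed.

Lemma qfpoly_horner_theta (x : K) : x = (map_poly qC x).[theta].
Proof.
by rewrite /theta -in_qpoly_comp_horner comp_polyXr in_qpoly_valK.
Qed.

Lemma theta_neq0 : P.[0] != 0 -> theta != 0.
Proof. by rewrite in_qpoly_eq0; exact: irredp_ndvdp_X. Qed.

Lemma root_map_theta : root (map_poly qC P) theta.
Proof.
by rewrite /root /theta -in_qpoly_comp_horner comp_polyXr in_qpoly_eq0.
Qed.

Lemma exprDn_card_exp (x y : K) i :
  (x + y) ^+ (q ^ i) = x ^+ (q ^ i) + y ^+ (q ^ i).
Proof.
by apply: exprDn_pchar; rewrite pnatX (eq_pnat _ (@pchar_qpoly _ P)) pchar_nat_card.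
Qed.

Lemma exprNn_card_exp (x : K) i : (- x) ^+ (q ^ i) = - x ^+ (q ^ i).
Proof. by rewrite exprNn -signr_odd oddX oddF orbT expr1 mulN1r. Qed.

Lemma expr_card_exp_inj i : injective (fun x : K => x ^+ (q ^ i)).
Proof.
move=> x y /= Exy; apply/eqP; rewrite -subr_eq0.
have : (x - y) ^+ (q ^ i) == 0 by rewrite exprDn_card_exp exprNn_card_exp Exy subrr.
by rewrite expf_eq0 => /andP[].
Qed.

Lemma horner_map_card_exp (B : {poly F}) (x : K) i :
  (map_poly qC B).[x] ^+ (q ^ i) = (map_poly qC B).[x ^+ (q ^ i)].
Proof.
have q0 : (q ^ i != 0)%N by rewrite expn_eq0 gtn_eqF // ltnW.
rewrite !horner_coef.
rewrite (big_morph (fun y : K => y ^+ (q ^ i)) (id1 := 0) (op1 := +%R)).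
- apply: eq_bigr => j _; rewrite exprMn coef_map exprAC.
  by rewrite -rmorphXn expf_card_exp.
- by move=> a b; rewrite exprDn_card_exp.
- by rewrite expr0n (negbTE q0).
Qed.

(* If theta were fixed by x |-> x ^ (q ^ k), so would be all of K, giving
   X ^ (q ^ k) - X more than q ^ k roots. *)
Lemma theta_card_exp_neq k : (0 < k < d)%N -> theta ^+ (q ^ k) != theta.
Proof.
case/andP=> k_gt0 kd; apply/eqP => fixk.
pose Z : {poly K} := 'X^(q ^ k) - 'X.
have sZ : size Z = (q ^ k).+1.
  rewrite size_polyDl ?size_polyXn // size_polyN size_polyX ltnS.
  by rewrite (leq_trans q_gt1) // -{1}(expn1 q) leq_exp2l.
have nZ : Z != 0 by rewrite -size_poly_eq0 sZ.
have rootsZ : all (root Z) (enum K).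
  apply/allP => x _; rewrite /root !hornerE [x in x ^+ _]qfpoly_horner_theta.
  by rewrite horner_map_card_exp fixk -qfpoly_horner_theta subrr.
have := max_poly_roots nZ rootsZ (enum_uniq _).
by rewrite -cardE card_qfpoly sZ ltnS leq_exp2l // leqNgt kd.
Qed.

Lemma uniq_theta_conjugates : uniq conjugates.
Proof.
rewrite map_inj_in_uniq ?iota_uniq //.
suff ltE i j : (i < j)%N -> (j < d)%N -> theta ^+ (q ^ i) != theta ^+ (q ^ j).
  move=> i j; rewrite !mem_index_iota => id jd Eij.
  case: (ltngtP i j) => // [ij | ji].
    by move: (ltE i j ij jd); rewrite Eij eqxx.
  by move: (ltE j i ji id); rewrite Eij eqxx.
move=> ij jd; have kd : (0 < j - i < d)%N.
  by rewrite subn_gt0 ij (leq_ltn_trans (leq_subr _ _)).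
apply: contra (theta_card_exp_neq kd) => /eqP Eij.
apply/eqP; apply: (@expr_card_exp_inj i).
by rewrite /= -exprM -expnD subnK ?Eij // ltnW.
Qed.

Lemma map_qfpoly_const_prod :
  map_poly qC P = \prod_(z <- conjugates) ('X - z%:P).
Proof.
have sizeE : size (map_poly qC P) = (size conjugates).+1.
  by rewrite size_map size_iota subn0 size_map_poly prednK // ltnW //; case: hPi.
rewrite [LHS](all_roots_prod_XsubC sizeE).
- by rewrite lead_coef_map (monicP hPm) rmorph1 scale1r.
- apply/allP => _ /mapP[i _ ->]; rewrite /root -horner_map_card_exp.
  by rewrite (eqP root_map_theta) expr0n expn_eq0 gtn_eqF // ltnW.
- by rewrite uniq_rootsE uniq_theta_conjugates.
Qed.

(* The norm of - theta from K down to F is P(0). *)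
Lemma qfpoly_const_P0 : qC P.[0] = (- theta) ^+ (\sum_(i < d) q ^ i).
Proof.
have P0E : (map_poly qC P).[0] = qC P.[0].
  by have := horner_map (qpolyC P) P 0; rewrite rmorph0.
rewrite -P0E map_qfpoly_const_prod horner_prod /conjugates.
rewrite big_map big_mkord -prodrXr.
by apply: eq_bigr => i _; rewrite hornerXsubC sub0r exprNn_card_exp.
Qed.

Lemma sqr_neg_theta_iff : P.[0] != 0 ->
  (exists y : K, y ^+ 2 = - theta) <-> (exists c : F, c ^+ 2 = P.[0]).
Proof.
move=> P0; have ntheta : - theta != 0 by rewrite oppr_eq0 theta_neq0.
have halfK : (#|K|./2 = (\sum_(i < d) q ^ i) * q./2)%N.
  apply: double_inj; rewrite doubleMr !odd_halfK ?odd_card_residue //.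
  by rewrite card_qfpoly predn_exp mulnC.
have normE : (- theta) ^+ #|K|./2 = qC (P.[0] ^+ q./2).
  by rewrite halfK exprM -qfpoly_const_P0 -[qC]/(qpolyC P) rmorphXn.
rewrite (euler_criterion odd_card_residue ntheta) (euler_criterion oddF P0) normE.
rewrite -[qC]/(qpolyC P) -(rmorph1 (qpolyC P)).
by split=> [/fmorph_inj | ->].
Qed.

Lemma sqrt_negX_mod_irredp : P.[0] != 0 ->
  (exists r, P %| r ^+ 2 + 'X) <-> (exists c : F, c ^+ 2 = P.[0]).
Proof.
move=> P0; rewrite -sqr_neg_theta_iff //; split=> [[r Pr] | [y Ey]].
  exists (in_qpoly P r); apply/eqP; rewrite -addr_eq0.
  by rewrite /theta -rmorphXn -rmorphD in_qpoly_eq0.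
exists (y : {poly F}); rewrite -in_qpoly_eq0 rmorphD rmorphXn /=.
by rewrite in_qpoly_valK Ey addNr.
Qed.

Lemma sqr_add_X_sqr_unit_lift g n : P.[0] != 0 -> ~~ (P %| g) ->
  exists A B, P ^+ n.+1 %| A ^+ 2 + 'X * B ^+ 2 - g.
Proof.
move=> P0 Pg; have [a [b Eab]] := @finField_sqr_add_mul_sqr
  K odd_card_residue theta (in_qpoly P g) (theta_neq0 P0).
have DAB : P %| (a : {poly F}) ^+ 2 + 'X * (b : {poly F}) ^+ 2 - g.
  rewrite -in_qpoly_eq0 !rmorphB !rmorphD !rmorphXn rmorphM /=.
  by rewrite !in_qpoly_valK -/theta Eab subrr.
have two_neq0 := finField_odd_two_neq0 oddF.
exact: sqr_add_X_sqr_lift two_neq0 hPi (irredp_ndvdp_X hPi P0) Pg DAB.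
Qed.

End ResidueField.

Section ChiValues.
Variable F : finFieldType.
Implicit Type f : {poly F}.

Lemma chi_eq0 f : chi f = 0 -> f.[0] = 0.
Proof. by rewrite /chi; case: eqP => // _; case: ifP. Qed.

Lemma chi_eqN1 f : chi f = -1 -> f.[0] != 0 /\ ~ exists c, c ^+ 2 = f.[0].
Proof.
rewrite /chi; case: eqP => // /eqP nf0; case: existsP => // nsq _.
by split=> // -[c Ec]; apply: nsq; exists c; rewrite Ec.
Qed.

Lemma chi_eq1 f : chi f = 1 <-> f.[0] != 0 /\ exists c, c ^+ 2 = f.[0].
Proof.
rewrite /chi; case: eqP => [-> | /eqP nf0]; first by split=> // -[].
case: existsP => [[c /eqP Ec] | nsq]; first by split=> // _; split=> //; exists c.
by split=> // -[_ [c Ec]]; case: nsq; exists c; rewrite Ec.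
Qed.

End ChiValues.

Section Representability.
Variable F : finFieldType.
Implicit Types (M P f g : {poly F}).

Lemma inA_modp M f g : f %% M = g %% M -> inA M f = inA M g.
Proof. by rewrite /inA => ->. Qed.

Lemma inA_dvdpE M f : inA M f <-> exists A B, M %| A ^+ 2 + 'X * B ^+ 2 - f.
Proof.
by split=> -[A [B E]]; exists A, B; apply/modp_eq_dvdP.
Qed.

Lemma inA_dvdp M N f : M %| N -> inA N f -> inA M f.
Proof.
move=> MN /inA_dvdpE[A [B D]]; apply/inA_dvdpE; exists A, B.
exact: dvdp_trans D.
Qed.

Lemma inA_dvdp_scale M c f :
  inA M f -> inA (c ^+ 2 * M) (c ^+ 2 * f).
Proof.
case/inA_dvdpE => A [B D]; apply/inA_dvdpE; exists (c * A), (c * B).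
have -> : (c * A) ^+ 2 + 'X * (c * B) ^+ 2 - c ^+ 2 * f =
  c ^+ 2 * (A ^+ 2 + 'X * B ^+ 2 - f) by ring.
by rewrite dvdp_mul.
Qed.

Lemma sqr_add_X_sqr_neq0 P nu alpha g A B :
  P != 0 -> (alpha < nu)%N -> ~~ (P %| g) ->
  P ^+ nu %| A ^+ 2 + 'X * B ^+ 2 - P ^+ alpha * g -> (A != 0) || (B != 0).
Proof.
move=> nP anu Pg; apply: contraTT; rewrite negb_or !negbK => /andP[/eqP-> /eqP->].
rewrite expr0n mulr0 add0r sub0r dvdpNr; apply: contra Pg => D.
by apply: (dvdp_expS_mul2l (k := alpha) nP); rewrite (dvdp_trans _ D) ?dvdp_exp2l.
Qed.

Lemma inA_inert P nu alpha g : odd #|F| -> P \is monic -> irreducible_poly P ->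
    P.[0] != 0 -> ~ (exists c, c ^+ 2 = P.[0]) -> (alpha < nu)%N -> ~~ (P %| g) ->
  inA (P ^+ nu) (P ^+ alpha * g) <-> ~~ odd alpha.
Proof.
move=> oddF hPm hPi P0 nsq anu Pg; have nP := irredp_neq0 hPi.
have nsqX r : ~~ (P %| r ^+ 2 + 'X).
  apply/negP => Pr; apply: nsq.
  by apply/(sqrt_negX_mod_irredp hPm hPi oddF P0); exists r.
split=> [/inA_dvdpE[A [B D]] | even_alpha].
  have [m [u [Eu Pu]]] :=
    sqr_add_X_sqr_even_valuation hPi nsqX (sqr_add_X_sqr_neq0 nP anu Pg D).
  rewrite Eu in D; have [<- _] := dvdp_exp_valuation_eq nP Pu Pg anu D.
  by rewrite odd_double.
have [A [B D]] := sqr_add_X_sqr_unit_lift hPm hPi oddF nu.-1 P0 Pg.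
rewrite prednK ?(leq_ltn_trans _ anu) // in D.
have [k ->] : exists k, alpha = k.*2.
  by exists alpha./2; rewrite -{1}(odd_double_half alpha) (negbTE even_alpha).
have Dg : inA (P ^+ nu) g by apply/inA_dvdpE; exists A, B.
rewrite -mul2n mulnC exprM.
exact: inA_dvdp (dvdp_mull _ (dvdpp _)) (inA_dvdp_scale _ Dg).
Qed.

Lemma inA_Xexp nu alpha g : odd #|F| -> (alpha < nu)%N -> ~~ ('X %| g) ->
  inA ('X ^+ nu) ('X ^+ alpha * g) <-> exists c, c ^+ 2 = g.[0].
Proof.
move=> oddF anu Xg; have nX : ('X : {poly F}) != 0 by rewrite polyX_eq0.
split=> [/inA_dvdpE[A [B D]] | [c Ec]].
  have [m [u [w [Eu u0 w0]]]] :=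
    sqr_add_X_sqr_Xvaluation (sqr_add_X_sqr_neq0 nX anu Xg D).
  rewrite Eu in D; have Xu : ~~ ('X %| u) by rewrite dvdp_Xl u0 sqrf_eq0.
  have [_] := dvdp_exp_valuation_eq nX Xu Xg anu D.
  by rewrite dvdp_Xl !hornerE u0 subr_eq0 => /eqP; exists w.
have Xc : ~~ ('X %| c%:P).
  by apply: contra Xg; rewrite !dvdp_Xl hornerC -Ec => /eqP->; rewrite expr0n.
have Dc : 'X %| c%:P ^+ 2 - g by rewrite dvdp_Xl !hornerE Ec subrr.
have [t [Dt _]] :=
  hensel_square (finField_odd_two_neq0 oddF) (irredp_X F) Xc Dc nu.-1.
rewrite prednK ?(leq_ltn_trans _ anu) // in Dt.
have Dg : inA ('X ^+ nu) ('X ^+ odd alpha * g).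
  apply/inA_dvdpE; case: (odd alpha); rewrite ?expr1 ?expr0 ?mul1r.
    by exists 0, t; rewrite [0 ^+ 2]expr2 mul0r add0r -mulrBr dvdp_mull.
  by exists t, 0; rewrite [0 ^+ 2]expr2 mul0r mulr0 addr0.
rewrite -(odd_double_half alpha) exprD -mul2n mulnC exprM mulrAC mulrC.
exact: inA_dvdp (dvdp_mull _ (dvdpp _)) (inA_dvdp_scale _ Dg).
Qed.

(* With t ^ 2 = - X, the form is (A - t B) (A + t B) and
   f = ((1 + f) / 2) ^ 2 - ((f - 1) / 2) ^ 2. *)
Lemma inA_of_sqrt_negX M t f : (2%:R : F) != 0 -> coprimep M t ->
  M %| t ^+ 2 + 'X -> inA M f.
Proof.
move=> two_neq0 cMt Dt; have [s Ds] := coprimep_invmod cMt.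
pose i2 := ((2%:R : F)^-1)%:P.
have H2 : 2%:R * i2 = 1 by rewrite -polyC_natr -polyCM mulfV.
apply/inA_dvdpE; exists (i2 * (1 + f)), (s * i2 * (f - 1)).
have -> : (i2 * (1 + f)) ^+ 2 + 'X * (s * i2 * (f - 1)) ^+ 2 - f =
    (t ^+ 2 + 'X) * (s * i2 * (f - 1)) ^+ 2
    - (t * s - 1) * (t * s + 1) * (i2 * (f - 1)) ^+ 2
    + (2%:R * i2 - 1) * (2%:R * i2 + 1) * f by ring.
by rewrite H2 subrr !mul0r addr0 dvdp_sub ?dvdp_mulr.
Qed.

Lemma inA_split P nu f : odd #|F| -> P \is monic -> irreducible_poly P ->
  P.[0] != 0 -> (exists c, c ^+ 2 = P.[0]) -> (0 < nu)%N -> inA (P ^+ nu) f.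
Proof.
move=> oddF hPm hPi P0 sq nu_gt0; have two_neq0 := finField_odd_two_neq0 oddF.
have [r Dr] := (sqrt_negX_mod_irredp hPm hPi oddF P0).2 sq.
have Pr : ~~ (P %| r).
  apply: contra (irredp_ndvdp_X hPi P0) => Pr.
  have Pr2 : P %| r ^+ 2 by rewrite expr2 dvdp_mulr.
  by have := dvdp_sub Dr Pr2; rewrite addrAC subrr add0r.
have Dr' : P %| r ^+ 2 - - 'X by rewrite opprK.
have [t [Dt Dtr]] := hensel_square two_neq0 hPi Pr Dr' nu.-1.
rewrite opprK prednK // in Dt.
have Pt : ~~ (P %| t).
  by apply: contra Pr => Pt; rewrite -(subrK t r) addrC -opprB dvdp_addr ?dvdpNr.
apply: (inA_of_sqrt_negX f two_neq0 _ Dt).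
by rewrite coprimep_expl ?irreducible_poly_coprime.
Qed.

Lemma monic_irredp_root0 P :
  P \is monic -> irreducible_poly P -> P.[0] = 0 -> P = 'X.
Proof.
move=> hPm [_ irrP] P0; have XP : 'X %| P by rewrite dvdp_Xl P0.
have /irrP : size ('X : {poly F}) != 1%N by rewrite size_polyX.
by move=> /(_ XP); rewrite eqp_sym eqp_monic ?monicX // => /eqP.
Qed.

Lemma maximal_exp_ndvdp P nu f alpha g : (alpha < nu)%N -> f %% P ^+ nu != 0 ->
    f %% P ^+ nu = (P ^+ alpha * g) %% P ^+ nu ->
    (forall beta h, (beta < nu)%N ->
       f %% P ^+ nu = (P ^+ beta * h) %% P ^+ nu -> (beta <= alpha)%N) ->
  ~~ (P %| g).
Proof.
move=> anu f0 Efg maxf; apply/negP => /dvdpP[h Egh].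
have Efh : f %% P ^+ nu = (P ^+ alpha.+1 * h) %% P ^+ nu.
  by rewrite Efg Egh exprSr mulrA [in RHS]mulrAC.
have [lt_nu | ge_nu] := ltnP alpha.+1 nu.
  by have := maxf _ _ lt_nu Efh; rewrite ltnn.
move: f0; rewrite Efh (_ : alpha.+1 = nu) 1?mulrC ?modp_mull ?eqxx //.
by apply/eqP; rewrite eqn_leq anu.
Qed.

End Representability.
Unset Implicit Arguments. Set Strict Implicit.

Theorem mainTheorem8 (F : finFieldType) (hq : odd #|{: F}|)
  (P : {poly F}) (hPm : P \is monic) (hPi : irreducible_poly P)
  (nu : nat) (hnu : (1 <= nu)%N) (f : {poly F})
  (hf : f %% P ^+ nu != 0)
  (alpha : nat) (g : {poly F}) (halpha : (alpha < nu)%N)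
  (hfg : f %% P ^+ nu = (P ^+ alpha * g) %% P ^+ nu)
  (hmax : forall (beta : nat) (h : {poly F}), (beta < nu)%N ->
      f %% P ^+ nu = (P ^+ beta * h) %% P ^+ nu -> (beta <= alpha)%N) :
  (chi P = -1 -> (inA (P ^+ nu) f <-> ~~ odd alpha)) /\
  (chi P = 0 -> (inA (P ^+ nu) f <-> chi g = 1)) /\
  (chi P = 1 -> inA (P ^+ nu) f).
Proof.
have Pg := maximal_exp_ndvdp halpha hf hfg hmax.
rewrite (inA_modp hfg); split; [|split].
- by case/chi_eqN1 => P0 nsq; apply: inA_inert.
- move/chi_eq0/(monic_irredp_root0 hPm hPi) => PX; subst P.
  rewrite inA_Xexp // chi_eq1; move: Pg; rewrite dvdp_Xl => g0.
  by split=> [sq | [] //].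
- by case/chi_eq1 => P0 sq; apply: inA_split.
Qed.
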